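(* Let $T$ be a measurable transformation of a space $X$ preserving a probability measure $\mu$, let $f:X\to\mathbb R$ be measurable, and let $n>0$ be an integer. Then $f$ is aperiodic for $T$ if and only if $S_nf=\sum_{k=0}^{n-1}f\circ T^k$ is aperiodic for $T^n$.
   Context: A measurable $g:X\to\mathbb R$ is called periodic for a $\mu$-preserving map $S$ if there exist $c\neq 0$, $d\in\mathbb R$ and a measurable $u:X\to\mathbb R$ such that $g=u-u\circ S+d \bmod c$ $\mu$-almost everywhere; it is aperiodic for $S$ if it is not periodic, i.e. for every measurable $u$ and every $\lambda\ne0$, $g-u+u\circ S\bmod\lambda$ is not $\mu$-a.e. constant. *)

From mathcomp Require Import all_boot all_order all_algebra.
From mathcomp Require Import all_classical all_reals all_analysis.
Set Implicit Arguments. Unset Strict Implicit. Unset Printing Implicit Defensive.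
Import Order.TTheory GRing.Theory Num.Theory.
Local Open Scope classical_set_scope.
Local Open Scope ring_scope.

Definition measure_preserving d (X : measurableType d) (R : realType)
  (mu : {measure set X -> \bar R}) (S : X -> X) : Prop :=
  measurable_fun setT S /\
  forall A : set X, measurable A -> mu (S @^-1` A) = mu A.

Definition periodic d (X : measurableType d) (R : realType)
  (mu : {measure set X -> \bar R}) (S : X -> X) (g : X -> R) : Prop :=
  exists (c e : R) (u : X -> R),
    c != 0 /\ measurable_fun setT u /\
    {ae mu, forall x, exists k : int, g x = u x - u (S x) + e + k%:~R * c}.

Definition aperiodic d (X : measurableType d) (R : realType)
  (mu : {measure set X -> \bar R}) (S : X -> X) (g : X -> R) : Prop :=
  ~ periodic mu S g.

Definition birkhoff_sum (X : Type) (R : realType) (T : X -> X) (n : nat)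
  (f : X -> R) : X -> R :=
  fun x => \sum_(0 <= k < n) f (iter k T x).

(** If [f = u - u \o T + e + k c] a.e. with [k] integer-valued, summing along [n]
    consecutive points of the orbit gives [S_n f = u - u \o T^n + n e + k' c].
    Conversely, if [S_n f = v - v \o T^n + e + k c] a.e., the transfer function
    [w = n^-1 * \sum_(j < n) (v \o T^j + S_j f)] satisfies
    [w - w \o T = f - n^-1 (S_n f - v + v \o T^n)], so [f = w - w \o T + e/n + k (c/n)]. *)
From mathcomp Require Import all_boot all_order all_algebra.
From mathcomp Require Import all_classical all_reals all_analysis.
From mathcomp Require Import measurable_realfun ring.
Set Implicit Arguments. Unset Strict Implicit. Unset Printing Implicit Defensive.
Import Order.TTheory GRing.Theory Num.Theory.
Local Open Scope classical_set_scope.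
Local Open Scope ring_scope.

Section MeasurePreserving.
Context d (X : measurableType d) (R : realType) (mu : {measure set X -> \bar R}).
Variable T : X -> X.

Lemma measurable_fun_iter j :
  measurable_fun setT T -> measurable_fun setT (iter j T).
Proof.
move=> mT; elim: j => [|j IH] /=; first exact: measurable_id.
exact: measurableT_comp mT IH.
Qed.

Hypothesis mpT : measure_preserving mu T.

Lemma ae_comp_measure_preserving (P : X -> Prop) :
  {ae mu, forall x, P x} -> {ae mu, forall x, P (T x)}.
Proof.
case: mpT => mT muT [N [mN muN PN]]; exists (T @^-1` N); split.
- by have := mT measurableT N mN; rewrite setTI.
- by rewrite muT.
- by move=> x /= NTx; apply: PN.
Qed.

Lemma ae_comp_iter (P : X -> Prop) j :
  {ae mu, forall x, P x} -> {ae mu, forall x, P (iter j T x)}.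
Proof.
move=> aeP; elim: j => [//|j IH].
have := @ae_comp_measure_preserving (fun y => P (iter j T y)) IH.
by apply: filterS => x; rewrite iterSr.
Qed.

Lemma ae_forall_orbit (P : X -> Prop) m :
  {ae mu, forall x, P x} -> {ae mu, forall x, forall j : 'I_m, P (iter j T x)}.
Proof. by move=> aeP; apply: filter_forall => j; exact: ae_comp_iter. Qed.

End MeasurePreserving.

Section BirkhoffSum.
Context (X : Type) (R : realType) (T : X -> X) (f : X -> R).

Lemma birkhoff_sum0 x : birkhoff_sum T 0 f x = 0.
Proof. by rewrite /birkhoff_sum big_geq. Qed.

Lemma birkhoff_sum_comp j x :
  birkhoff_sum T j f (T x) = birkhoff_sum T j.+1 f x - f x.
Proof.
rewrite /birkhoff_sum big_nat_recl //= addrC addKr.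
by apply: eq_bigr => i _; rewrite -iterSr.
Qed.

Lemma birkhoff_sum_coboundary_mod (u : X -> R) (c e : R) m x :
  (forall j : 'I_m, exists k : int,
      f (iter j T x) = u (iter j T x) - u (T (iter j T x)) + e + k%:~R * c) ->
  exists k : int,
    birkhoff_sum T m f x = u x - u (iter m T x) + m%:R * e + k%:~R * c.
Proof.
move=> /fin_all_exists[k fE]; exists (\sum_j k j).
have telescope : \sum_(j < m) (u (iter j T x) - u (T (iter j T x)))
    = u x - u (iter m T x).
  rewrite -(big_mkord xpredT (fun j => u (iter j T x) - u (T (iter j T x)))).
  rewrite (telescope_sumr_eq (fun j => - u (iter j T x))) //; first by ring.
  by move=> j _ /=; ring.
rewrite /birkhoff_sum big_mkord (eq_bigr _ (fun j _ => fE j)) 2!big_split /=.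
by rewrite telescope sumr_const card_ord mulr_natl -mulr_suml rmorph_sum.
Qed.

Lemma measurable_birkhoff_sum d (Y : measurableType d) (S : Y -> Y) (g : Y -> R) m :
  measurable_fun setT S -> measurable_fun setT g ->
  measurable_fun setT (birkhoff_sum S m g).
Proof.
move=> mS mg; apply: measurable_sum => k.
exact: measurableT_comp mg (measurable_fun_iter _ mS).
Qed.

Definition averaged_transfer (n : nat) (v : X -> R) (x : X) : R :=
  n%:R^-1 * \sum_(0 <= j < n) (v (iter j T x) + birkhoff_sum T j f x).

Lemma averaged_transfer_coboundary n v x : (0 < n)%N ->
  averaged_transfer n v x - averaged_transfer n v (T x)
  = f x - n%:R^-1 * (birkhoff_sum T n f x - (v x - v (iter n T x))).
Proof.
move=> n_gt0; have n0 : n%:R != 0 :> R by rewrite pnatr_eq0 -lt0n.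
rewrite /averaged_transfer -mulrBr -sumrB.
rewrite (telescope_sumr_eq
  (fun j => - (v (iter j T x) + birkhoff_sum T j f x) + j%:R * f x)) //.
  by rewrite birkhoff_sum0; field.
by move=> j _; rewrite birkhoff_sum_comp -iterSr -natr1; ring.
Qed.

End BirkhoffSum.

Section PeriodicBirkhoffSum.
Context d (X : measurableType d) (R : realType) (mu : {measure set X -> \bar R}).
Variables (T : X -> X) (f : X -> R).

Lemma periodic_birkhoff_sum n : measure_preserving mu T ->
  periodic mu T f -> periodic mu (iter n T) (birkhoff_sum T n f).
Proof.
move=> mpT [c [e [u [c0 [u_meas aef]]]]].
exists c, (n%:R * e), u; do 2!split => //.
apply: filterS (ae_forall_orbit mpT n aef) => x.
exact: birkhoff_sum_coboundary_mod.
Qed.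

Lemma periodic_of_birkhoff_sum n : (0 < n)%N ->
  measurable_fun setT T -> measurable_fun setT f ->
  periodic mu (iter n T) (birkhoff_sum T n f) -> periodic mu T f.
Proof.
move=> n_gt0 mT mf [c [e [v [c0 [v_meas aeS]]]]].
have n0 : n%:R != 0 :> R by rewrite pnatr_eq0 -lt0n.
exists (c / n%:R), (e / n%:R), (averaged_transfer T f n v).
split; first by rewrite mulf_neq0 // invr_eq0.
split.
  apply: measurable_funM; first exact: measurable_cst.
  apply: measurable_sum => j; apply: measurable_funD.
    exact: measurableT_comp v_meas (measurable_fun_iter _ mT).
  exact: measurable_birkhoff_sum.
apply: filterS aeS => x [k Sk]; exists k.
have := averaged_transfer_coboundary T f v x n_gt0.
rewrite Sk => ->; field; exact: n0.
Qed.

End PeriodicBirkhoffSum.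

Theorem lemma2p1 (d : measure_display) (X : measurableType d) (R : realType)
  (mu : probability X R) (T : X -> X) (f : X -> R) (n : nat) :
  measure_preserving mu T ->
  measurable_fun setT f ->
  (0 < n)%N ->
  aperiodic mu T f <-> aperiodic mu (iter n T) (birkhoff_sum T n f).
Proof.
move=> mpT mf n_gt0; split=> aper per; apply: aper.
- exact: periodic_of_birkhoff_sum n_gt0 mpT.1 mf per.
- exact: periodic_birkhoff_sum.
Qed.
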